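(* Let $a<b$, $\gamma>0$, $k\in\{1,2,3\}$ and $\phi\in\mathcal{C}^{k+1}[a,b]$. Define, using the operators of the context, \[ \phi_{1,1}=\phi,\quad \phi_{1,2}(x)=\mathcal{D}_L^{\,\phi'(a)/\gamma}[\phi_{1,1},\gamma](x)-\sum_{m=2}^{k}\left(-\frac1\gamma\right)^m\partial_x^m\phi(a)\,e^{-\gamma(x-a)}, \] \[ \phi_{1,3}(x)=\mathcal{D}_L^{\,0}[\phi_{1,2},\gamma](x)+\sum_{m=2}^{k}(m-1)\left(-\frac1\gamma\right)^m\partial_x^m\phi(a)\,e^{-\gamma(x-a)}, \] \[ \phi_{2,1}=\phi,\quad \phi_{2,2}(x)=\mathcal{D}_R^{\,-\phi'(b)/\gamma}[\phi_{2,1},\gamma](x)-\sum_{m=2}^{k}\left(\frac1\gamma\right)^m\partial_x^m\phi(b)\,e^{-\gamma(b-x)}, \] \[ \phi_{2,3}(x)=\mathcal{D}_R^{\,0}[\phi_{2,2},\gamma](x)+\sum_{m=2}^{k}(m-1)\left(\frac1\gamma\right)^m\partial_x^m\phi(b)\,e^{-\gamma(b-x)}, \] and the modified partial sums \[ \widetilde{\mathcal{P}}^L_k[\phi,\gamma]=\gamma\,\mathcal{D}_L^{\,\phi'(a)/\gamma}[\phi_{1,1},\gamma]+\gamma\sum_{p=2}^{k}\mathcal{D}_L^{\,0}[\phi_{1,p},\gamma]\ \ (k=1,2),\qquad \widetilde{\mathcal{P}}^L_3[\phi,\gamma]=\gamma\,\mathcal{D}_L^{\,\phi'(a)/\gamma}[\phi_{1,1},\gamma]+\gamma\sum_{p=2}^{3}\mathcal{D}_L^{\,0}[\phi_{1,p},\gamma]-\gamma\,\mathcal{D}_0^{\,0,0}[\phi_{1,3},\gamma],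 \] \[ \widetilde{\mathcal{P}}^R_k[\phi,\gamma]=-\gamma\,\mathcal{D}_R^{\,-\phi'(b)/\gamma}[\phi_{2,1},\gamma]-\gamma\sum_{p=2}^{k}\mathcal{D}_R^{\,0}[\phi_{2,p},\gamma]\ \ (k=1,2),\qquad \widetilde{\mathcal{P}}^R_3[\phi,\gamma]=-\gamma\,\mathcal{D}_R^{\,-\phi'(b)/\gamma}[\phi_{2,1},\gamma]-\gamma\sum_{p=2}^{3}\mathcal{D}_R^{\,0}[\phi_{2,p},\gamma]+\gamma\,\mathcal{D}_0^{\,0,0}[\phi_{2,3},\gamma]. \] Then there is a constant $C>0$, independent of $\gamma$ and $\phi$, such that \[ \|\partial_x\phi-\widetilde{\mathcal{P}}^L_k[\phi,\gamma]\|_{\infty}\le C\left(\frac1\gamma\right)^k\|\partial_x^{k+1}\phi\|_\infty,\qquad \|\partial_x\phi-\widetilde{\mathcal{P}}^R_k[\phi,\gamma]\|_{\infty}\le C\left(\frac1\gamma\right)^k\|\partial_x^{k+1}\phi\|_\infty, \] where $\|\cdot\|_\infty$ is the supremum norm on $[a,b]$.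
   Context: Fix $a<b$, $\gamma>0$, $\mu=e^{-\gamma(b-a)}$. For continuous $v$ on $[a,b]$ let $I^{L}[v,\gamma](x)=\gamma\int_a^x e^{-\gamma(x-y)}v(y)\,dy$, $I^{R}[v,\gamma](x)=\gamma\int_x^b e^{-\gamma(y-x)}v(y)\,dy$, $I^{0}[v,\gamma](x)=\frac{\gamma}{2}\int_a^b e^{-\gamma|x-y|}v(y)\,dy$. For a real number $c$: $\mathcal{D}_L^{\,c}[v,\gamma](x)=v(x)-I^L[v,\gamma](x)-(v(a)-c)e^{-\gamma(x-a)}$ (the unique operator of this form with value $c$ at $x=a$); $\mathcal{D}_R^{\,c}[v,\gamma](x)=v(x)-I^R[v,\gamma](x)-(v(b)-c)e^{-\gamma(b-x)}$ (value $c$ at $x=b$). For real numbers $c_a,c_b$: $\mathcal{D}_0^{\,c_a,c_b}[v,\gamma](x)=v(x)-I^0[v,\gamma](x)-A_0e^{-\gamma(x-a)}-B_0e^{-\gamma(b-x)}$ with $A_0=\frac{1}{1-\mu^2}\big(\mu(I^0[v,\gamma](b)-v(b)+c_b)-(I^0[v,\gamma](a)-v(a)+c_a)\big)$, $B_0=\frac{1}{1-\mu^2}\big(\mu(I^0[v,\gamma](a)-v(a)+c_a)-(I^0[v,\gamma](b)-v(b)+c_b)\big)$, so that its values at $a$ and $b$ are $c_a$ and $c_b$. Derivatives at endpoints are one-sided; $\phi'=\partial_x\phi$. *)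

From Stdlib Require Import Reals Lra.
From Coquelicot Require Import Coquelicot.
Open Scope R_scope.

Definition deriv_within (a b : R) (f f' : R -> R) : Prop :=
  forall x, a <= x <= b ->
    filterlim (fun y => (f y - f x) / (y - x))
      (within (fun y => a <= y <= b /\ y <> x) (locally x))
      (locally (f' x)).

Definition cont_within (a b : R) (f : R -> R) : Prop :=
  forall x, a <= x <= b ->
    filterlim f (within (fun y => a <= y <= b) (locally x)) (locally (f x)).

(* d 0 = phi, d j = j-th derivative of phi on [a,b] for j <= n,
   and d n is continuous on [a,b]:  phi in C^n[a,b]. *)
Definition Cn_ab (n : nat) (a b : R) (d : nat -> R -> R) : Prop :=
  (forall j, (j < n)%nat -> deriv_within a b (d j) (d (S j))) /\
  cont_within a b (d n).

Definition supnorm (a b : R) (f : R -> R) : R :=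
  real (Lub_Rbar (fun r => exists x, a <= x <= b /\ r = Rabs (f x))).

Definition IL (a : R) (g : R) (v : R -> R) (x : R) : R :=
  g * RInt (fun y => exp (- g * (x - y)) * v y) a x.
Definition IR (b : R) (g : R) (v : R -> R) (x : R) : R :=
  g * RInt (fun y => exp (- g * (y - x)) * v y) x b.
Definition I0 (a b : R) (g : R) (v : R -> R) (x : R) : R :=
  g / 2 * RInt (fun y => exp (- g * Rabs (x - y)) * v y) a b.

Definition DL (a : R) (c : R) (g : R) (v : R -> R) (x : R) : R :=
  v x - IL a g v x - (v a - c) * exp (- g * (x - a)).
Definition DR (b : R) (c : R) (g : R) (v : R -> R) (x : R) : R :=
  v x - IR b g v x - (v b - c) * exp (- g * (b - x)).

Definition D0 (a b : R) (ca cb : R) (g : R) (v : R -> R) (x : R) : R :=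
  let mu := exp (- g * (b - a)) in
  let A0 := / (1 - mu ^ 2) *
     (mu * (I0 a b g v b - v b + cb) - (I0 a b g v a - v a + ca)) in
  let B0 := / (1 - mu ^ 2) *
     (mu * (I0 a b g v a - v a + ca) - (I0 a b g v b - v b + cb)) in
  v x - I0 a b g v x - A0 * exp (- g * (x - a)) - B0 * exp (- g * (b - x)).

Definition phi12 (a : R) (k : nat) (g : R) (d : nat -> R -> R) (x : R) : R :=
  DL a (d 1%nat a / g) g (d 0%nat) x
  - sum_n_m (fun m => (- / g) ^ m * d m a * exp (- g * (x - a))) 2 k.

Definition phi13 (a : R) (k : nat) (g : R) (d : nat -> R -> R) (x : R) : R :=
  DL a 0 g (phi12 a k g d) x
  + sum_n_m (fun m => (INR m - 1) * (- / g) ^ m * d m a * exp (- g * (x - a))) 2 k.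

Definition phi22 (b : R) (k : nat) (g : R) (d : nat -> R -> R) (x : R) : R :=
  DR b (- (d 1%nat b / g)) g (d 0%nat) x
  - sum_n_m (fun m => (/ g) ^ m * d m b * exp (- g * (b - x))) 2 k.

Definition phi23 (b : R) (k : nat) (g : R) (d : nat -> R -> R) (x : R) : R :=
  DR b 0 g (phi22 b k g d) x
  + sum_n_m (fun m => (INR m - 1) * (/ g) ^ m * d m b * exp (- g * (b - x))) 2 k.

Definition phi1 (a : R) (k : nat) (g : R) (d : nat -> R -> R) (p : nat) : R -> R :=
  match p with
  | 2%nat => phi12 a k g d
  | 3%nat => phi13 a k g d
  | _ => d 0%nat
  end.
Definition phi2 (b : R) (k : nat) (g : R) (d : nat -> R -> R) (p : nat) : R -> R :=
  match p with
  | 2%nat => phi22 b k g d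
  | 3%nat => phi23 b k g d
  | _ => d 0%nat
  end.

Definition PL (a b : R) (k : nat) (g : R) (d : nat -> R -> R) (x : R) : R :=
  g * DL a (d 1%nat a / g) g (phi1 a k g d 1) x
  + g * sum_n_m (fun p => DL a 0 g (phi1 a k g d p) x) 2 k
  - (if (k =? 3)%nat then g * D0 a b 0 0 g (phi1 a k g d 3) x else 0).

Definition PR (a b : R) (k : nat) (g : R) (d : nat -> R -> R) (x : R) : R :=
  - g * DR b (- (d 1%nat b / g)) g (phi2 b k g d 1) x
  - g * sum_n_m (fun p => DR b 0 g (phi2 b k g d p) x) 2 k
  + (if (k =? 3)%nat then g * D0 a b 0 0 g (phi2 b k g d 3) x else 0).

(** The data phi^(j) on [a,b] are first extended to a chain c_j on all of R with
    c_j' = c_(j+1). For such a chain integration by parts gives D_L^0[v] = I^L[v'] / gamma,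
    and the defining formulas of phi_(1,2) and phi_(1,3) telescope into an exact error
    formula: phi' - P^L_k = gamma^(-k) (I^L)^k phi^(k+1) for k = 1, 2, and the same plus
    gamma D_0[phi_(1,3)] for k = 3. The kernel of I^L has mass 1 - exp(-gamma (x - a)) <= 1,
    so I^L does not increase the sup norm; D_0 is controlled in the same way after splitting
    I^0 = (I^L + I^R) / 2, which yields C = 19. The reflection x -> a + b - x exchanges I^L
    and I^R and turns P^R_k into -P^L_k of the reflected chain (-1)^j phi^(j)(a + b - x),
    so the right-sided estimate follows from the left-sided one. *)

From Stdlib Require Import Reals Lra Lia FunctionalExtensionality.
From Coquelicot Require Import Coquelicot.
Open Scope R_scope.

Lemma continuous_Rplus (f h : R -> R) x :
  continuous f x -> continuous h x -> continuous (fun y => f y + h y) x.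
Proof. exact (continuous_plus f h x). Qed.

Lemma continuous_Rminus (f h : R -> R) x :
  continuous f x -> continuous h x -> continuous (fun y => f y - h y) x.
Proof. exact (continuous_minus f h x). Qed.

Lemma continuous_Rmult (f h : R -> R) x :
  continuous f x -> continuous h x -> continuous (fun y => f y * h y) x.
Proof. exact (continuous_mult f h x). Qed.

Lemma continuous_Rexp (f : R -> R) x :
  continuous f x -> continuous (fun y => exp (f y)) x.
Proof.
  intros Hf. apply (continuous_comp f exp); [exact Hf |].
  apply (ex_derive_continuous (K:=R_AbsRing) (V:=R_NormedModule)).
  auto_derive. exact I.
Qed.

Lemma continuous_Rcomp (f h : R -> R) x :
  continuous f x -> continuous h (f x) -> continuous (fun y => h (f y)) x.
Proof. exact (continuous_comp f h x). Qed.

Lemma continuous_Rabs_comp (f : R -> R) x :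
  continuous f x -> continuous (fun y => Rabs (f y)) x.
Proof. intros Hf. apply (continuous_comp f Rabs); [exact Hf | apply continuous_Rabs]. Qed.

Create HintDb rcont.
#[export] Hint Resolve continuous_Rplus continuous_Rminus continuous_Rmult
  continuous_Rexp continuous_Rabs_comp continuous_const continuous_id : rcont.
#[export] Hint Resolve continuous_Rcomp | 5 : rcont.

Ltac solve_continuous := intros; auto 20 with rcont.

Lemma ex_RInt_continuous_R (f : R -> R) l r :
  (forall y, continuous f y) -> ex_RInt f l r.
Proof. intros Hf. apply (ex_RInt_continuous (V:=R_CompleteNormedModule)). intros; apply Hf. Qed.

Lemma is_derive_RInt_upper (h : R -> R) l x :
  (forall y, continuous h y) -> is_derive (fun t => RInt h l t) x (h x).
Proof.
  intros Hh. apply (is_derive_RInt (V:=R_CompleteNormedModule) h _ l x); [| apply Hh].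
  apply filter_forall. intros t. apply (RInt_correct (V:=R_CompleteNormedModule)).
  apply ex_RInt_continuous_R, Hh.
Qed.

Lemma continuous_primitive (h : R -> R) l x :
  (forall y, continuous h y) -> continuous (fun t => RInt h l t) x.
Proof.
  intros Hh. apply (ex_derive_continuous (K:=R_AbsRing) (V:=R_NormedModule)).
  exists (h x). apply is_derive_RInt_upper, Hh.
Qed.

Lemma RInt_kernel_plus (K u w : R -> R) l r :
  (forall y, continuous K y) -> (forall y, continuous u y) -> (forall y, continuous w y) ->
  RInt (fun y => K y * (u y + w y)) l r
  = RInt (fun y => K y * u y) l r + RInt (fun y => K y * w y) l r.
Proof.
  intros HK Hu Hw.
  rewrite <- (RInt_plus (V:=R_CompleteNormedModule))
    by (apply ex_RInt_continuous_R; solve_continuous).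
  apply (RInt_ext (V:=R_CompleteNormedModule)). intros y _. apply Rmult_plus_distr_l.
Qed.

Lemma RInt_kernel_scal (K u : R -> R) (al l r : R) :
  (forall y, continuous K y) -> (forall y, continuous u y) ->
  RInt (fun y => K y * (al * u y)) l r = al * RInt (fun y => K y * u y) l r.
Proof.
  intros HK Hu.
  rewrite <- (RInt_scal (V:=R_CompleteNormedModule))
    by (apply ex_RInt_continuous_R; solve_continuous).
  apply (RInt_ext (V:=R_CompleteNormedModule)). intros y _.
  cbv [scal]; simpl; unfold mult; simpl. ring.
Qed.

Lemma RInt_comp_reflect (f : R -> R) s l r :
  ex_RInt f (s - r) (s - l) -> RInt (fun y => f (s - y)) l r = RInt f (s - r) (s - l).
Proof.
  intros H. apply (RInt_correct (V:=R_CompleteNormedModule)) in H.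
  set (I := RInt f (s - r) (s - l)) in *.
  apply (is_RInt_unique (V:=R_CompleteNormedModule)).
  apply (is_RInt_swap (V:=R_CompleteNormedModule)) in H.
  replace (s - l) with (-1 * l + s) in H by ring.
  replace (s - r) with (-1 * r + s) in H by ring.
  apply is_RInt_comp_lin, (is_RInt_scal _ _ _ (-1)) in H.
  replace I with (scal (-1) (opp I)).
  - eapply is_RInt_ext; [| exact H]. intros y _.
    cbv [scal opp]; simpl; unfold mult; simpl.
    replace (-1 * y + s) with (s - y) by ring. ring.
  - cbv [scal opp]; simpl; unfold mult; simpl. ring.
Qed.

Lemma is_derive_Rmult (f h : R -> R) x df dh :
  is_derive f x df -> is_derive h x dh -> is_derive (fun y => f y * h y) x (df * h x + f x * dh).
Proof. intros Hf Hh. apply (is_derive_mult f h); auto. intros; apply Rmult_comm. Qed.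

(* Coquelicot states many equalities at a normed-module carrier convertible to R, which
   ring and field do not recognise. *)
Ltac as_real_eq := match goal with |- ?x = ?y => change (@eq R x y) end.

(** * The integral operators *)

Section Left_operator.
Variables (a g : R).

Lemma IL_at_left (v : R -> R) : IL a g v a = 0.
Proof.
  unfold IL. rewrite (RInt_point (V:=R_CompleteNormedModule)). cbv [zero]; simpl. ring.
Qed.

Lemma IL_plus (u w : R -> R) x :
  (forall y, continuous u y) -> (forall y, continuous w y) ->
  IL a g (fun y => u y + w y) x = IL a g u x + IL a g w x.
Proof.
  intros Hu Hw. unfold IL.
  rewrite (RInt_kernel_plus (fun y => exp (- g * (x - y)))) by solve_continuous. ring.
Qed.

Lemma IL_scal (al : R) (u : R -> R) x :
  (forall y, continuous u y) -> IL a g (fun y => al * u y) x = al * IL a g u x.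
Proof.
  intros Hu. unfold IL.
  rewrite (RInt_kernel_scal (fun y => exp (- g * (x - y)))) by solve_continuous. ring.
Qed.

Lemma IL_minus (u w : R -> R) x :
  (forall y, continuous u y) -> (forall y, continuous w y) ->
  IL a g (fun y => u y - w y) x = IL a g u x - IL a g w x.
Proof.
  intros Hu Hw.
  replace (fun y => u y - w y) with (fun y => u y + -1 * w y)
    by (apply functional_extensionality; intros; ring).
  rewrite IL_plus, IL_scal by solve_continuous. ring.
Qed.

Lemma IL_const (k x : R) : g <> 0 -> IL a g (fun _ => k) x = k * (1 - exp (- g * (x - a))).
Proof.
  intros Hg. unfold IL.
  assert (Hprim : is_RInt (fun y => exp (- g * (x - y)) * k) a x
    (k / g * exp (- g * (x - x)) - k / g * exp (- g * (x - a)))).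
  { apply (is_RInt_derive (V:=R_CompleteNormedModule) (fun y => k / g * exp (- g * (x - y)))).
    - intros y _. auto_derive; [exact I |]. as_real_eq. unfold Rminus. field. exact Hg.
    - intros y _. solve_continuous. }
  rewrite (is_RInt_unique _ _ _ _ Hprim).
  replace (- g * (x - x)) with 0 by ring. rewrite exp_0. field. exact Hg.
Qed.

Lemma IL_factor (u : R -> R) x : (forall y, continuous u y) ->
  IL a g u x = g * exp (- g * x) * RInt (fun y => exp (g * y) * u y) a x.
Proof.
  intros Hu. unfold IL. rewrite Rmult_assoc. f_equal.
  rewrite <- (RInt_kernel_scal (fun y => exp (g * y))) by solve_continuous.
  apply (RInt_ext (V:=R_CompleteNormedModule)). intros y _. as_real_eq.
  replace (- g * (x - y)) with (g * y + - g * x) by ring. rewrite exp_plus. ring.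
Qed.

Lemma continuous_IL (u : R -> R) x : (forall y, continuous u y) -> continuous (IL a g u) x.
Proof.
  intros Hu.
  apply (continuous_ext (fun t => g * exp (- g * t) * RInt (fun y => exp (g * y) * u y) a t)).
  { intros t. symmetry. apply IL_factor, Hu. }
  apply continuous_Rmult; [solve_continuous |].
  apply continuous_primitive. solve_continuous.
Qed.

Lemma IL_bound (b : R) (u : R -> R) (M x : R) : 0 < g -> (forall y, continuous u y) ->
  (forall y, a <= y <= b -> Rabs (u y) <= M) -> a <= x <= b -> Rabs (IL a g u x) <= M.
Proof.
  intros Hg Hu HM Hx.
  assert (HM0 : 0 <= M) by (apply Rle_trans with (Rabs (u a)); [apply Rabs_pos | apply HM; lra]).
  assert (Hint : Rabs (IL a g u x) <= IL a g (fun _ => M) x).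
  { unfold IL. rewrite Rabs_mult, (Rabs_pos_eq g) by lra.
    apply Rmult_le_compat_l; [lra |].
    eapply Rle_trans; [apply abs_RInt_le; [lra | apply ex_RInt_continuous_R; solve_continuous] |].
    apply RInt_le; [lra | | apply ex_RInt_continuous_R; solve_continuous |].
    - apply ex_RInt_continuous_R. solve_continuous.
    - intros y Hy. rewrite Rabs_mult, (Rabs_pos_eq (exp _)) by (left; apply exp_pos).
      apply Rmult_le_compat_l; [left; apply exp_pos | apply HM; lra]. }
  rewrite IL_const in Hint by lra.
  assert (exp (- g * (x - a)) > 0) by apply exp_pos. nra.
Qed.

Lemma DL0_by_parts (u u' : R -> R) x : g <> 0 ->
  (forall y, is_derive u y (u' y)) -> (forall y, continuous u' y) ->
  DL a 0 g u x = / g * IL a g u' x.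
Proof.
  intros Hg Hd Hc.
  assert (Hu : forall y, continuous u y).
  { intros y. apply (ex_derive_continuous (K:=R_AbsRing) (V:=R_NormedModule)).
    exists (u' y). apply Hd. }
  assert (Hprim : is_RInt (fun y => exp (- g * (x - y)) * (g * u y + u' y)) a x
    (exp (- g * (x - x)) * u x - exp (- g * (x - a)) * u a)).
  { apply (is_RInt_derive (V:=R_CompleteNormedModule) (fun y => exp (- g * (x - y)) * u y)).
    - intros y _.
      replace (exp (- g * (x - y)) * (g * u y + u' y))
        with (g * exp (- g * (x - y)) * u y + exp (- g * (x - y)) * u' y) by ring.
      apply (is_derive_Rmult (fun y => exp (- g * (x - y))) u); [| apply Hd].
      auto_derive; [exact I |]. as_real_eq. unfold Rminus. ring.
    - intros y _. solve_continuous. }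
  apply (is_RInt_unique (V:=R_CompleteNormedModule)) in Hprim.
  rewrite RInt_kernel_plus, RInt_kernel_scal in Hprim by solve_continuous.
  replace (- g * (x - x)) with 0 in Hprim by ring. rewrite exp_0 in Hprim.
  unfold DL, IL. field_simplify; [| exact Hg]. simpl in Hprim. lra.
Qed.

End Left_operator.

#[export] Hint Resolve continuous_IL : rcont.

Section Right_operator.
Variables (a b g : R).

Lemma IR_reflect (v : R -> R) x : (forall y, continuous v y) ->
  IR b g v x = IL a g (fun y => v (a + b - y)) (a + b - x).
Proof.
  intros Hv. unfold IR, IL. f_equal. symmetry.
  set (f := fun t => exp (- g * (t - x)) * v t).
  transitivity (RInt (fun y => f (a + b - y)) a (a + b - x)).
  - apply (RInt_ext (V:=R_CompleteNormedModule)). intros y _. unfold f.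
    replace (a + b - y - x) with (a + b - x - y) by ring. reflexivity.
  - rewrite RInt_comp_reflect by (apply ex_RInt_continuous_R; unfold f; solve_continuous).
    f_equal; ring.
Qed.

Lemma DR_reflect (k : R) (v : R -> R) x : (forall y, continuous v y) ->
  DR b k g v x = DL a k g (fun y => v (a + b - y)) (a + b - x).
Proof.
  intros Hv. unfold DR, DL. rewrite IR_reflect by exact Hv.
  replace (a + b - (a + b - x)) with x by ring. replace (a + b - a) with b by ring.
  replace (a + b - x - a) with (b - x) by ring. reflexivity.
Qed.

Lemma I0_reflect (v : R -> R) x : (forall y, continuous v y) ->
  I0 a b g v x = I0 a b g (fun y => v (a + b - y)) (a + b - x).
Proof.
  intros Hv. unfold I0. f_equal. symmetry.
  set (f := fun t => exp (- g * Rabs (x - t)) * v t).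
  transitivity (RInt (fun y => f (a + b - y)) a b).
  - apply (RInt_ext (V:=R_CompleteNormedModule)). intros y _. unfold f.
    rewrite <- (Rabs_Ropp (x - _)). replace (- (x - (a + b - y))) with (a + b - x - y) by ring.
    reflexivity.
  - rewrite RInt_comp_reflect; [f_equal; ring |].
    apply ex_RInt_continuous_R. unfold f. solve_continuous.
Qed.

Lemma D0_reflect (v : R -> R) x : (forall y, continuous v y) ->
  D0 a b 0 0 g v x = D0 a b 0 0 g (fun y => v (a + b - y)) (a + b - x).
Proof.
  intros Hv. unfold D0. rewrite !(I0_reflect v) by exact Hv.
  replace (a + b - a) with b by ring. replace (a + b - b) with a by ring.
  replace (a + b - (a + b - x)) with x by ring.
  replace (- g * (a + b - x - a)) with (- g * (b - x)) by ring.
  replace (- g * (b - (a + b - x))) with (- g * (x - a)) by ring.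
  ring.
Qed.

Lemma IR_bound (u : R -> R) (M x : R) : 0 < g -> (forall y, continuous u y) ->
  (forall y, a <= y <= b -> Rabs (u y) <= M) -> a <= x <= b -> Rabs (IR b g u x) <= M.
Proof.
  intros Hg Hu HM Hx. rewrite IR_reflect by exact Hu.
  apply (IL_bound a g b); [exact Hg | solve_continuous | | lra].
  intros y Hy. apply HM. lra.
Qed.

Lemma DR0_by_parts (u u' : R -> R) x : g <> 0 ->
  (forall y, is_derive u y (u' y)) -> (forall y, continuous u' y) ->
  DR b 0 g u x = - / g * IR b g u' x.
Proof.
  intros Hg Hd Hc.
  assert (Hu : forall y, continuous u y).
  { intros y. apply (ex_derive_continuous (K:=R_AbsRing) (V:=R_NormedModule)).
    exists (u' y). apply Hd. }
  rewrite DR_reflect, (IR_reflect u') by assumption.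
  rewrite (DL0_by_parts a g _ (fun y => -1 * u' (a + b - y))); [| exact Hg | | solve_continuous].
  - rewrite IL_scal by solve_continuous. ring.
  - intros y. apply (is_derive_comp u (fun y => a + b - y)); [apply Hd |].
    auto_derive; [exact I | as_real_eq; ring].
Qed.

Lemma IR_plus (u w : R -> R) x :
  (forall y, continuous u y) -> (forall y, continuous w y) ->
  IR b g (fun y => u y + w y) x = IR b g u x + IR b g w x.
Proof.
  intros Hu Hw. unfold IR.
  rewrite (RInt_kernel_plus (fun y => exp (- g * (y - x)))) by solve_continuous. ring.
Qed.

Lemma IR_scal (al : R) (u : R -> R) x :
  (forall y, continuous u y) -> IR b g (fun y => al * u y) x = al * IR b g u x.
Proof.
  intros Hu. unfold IR.
  rewrite (RInt_kernel_scal (fun y => exp (- g * (y - x)))) by solve_continuous. ring.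
Qed.

Lemma IR_minus (u w : R -> R) x :
  (forall y, continuous u y) -> (forall y, continuous w y) ->
  IR b g (fun y => u y - w y) x = IR b g u x - IR b g w x.
Proof.
  intros Hu Hw.
  replace (fun y => u y - w y) with (fun y => u y + -1 * w y)
    by (apply functional_extensionality; intros; ring).
  rewrite IR_plus, IR_scal by solve_continuous. ring.
Qed.

Lemma I0_split (u : R -> R) y : (forall z, continuous u z) -> a <= y <= b ->
  I0 a b g u y = (IL a g u y + IR b g u y) / 2.
Proof.
  intros Hu Hy. unfold I0, IL, IR.
  set (f := fun z => exp (- g * Rabs (y - z)) * u z).
  assert (Hf : forall z, continuous f z) by (unfold f; solve_continuous).
  rewrite <- (RInt_Chasles (V:=R_CompleteNormedModule) f a y b)
    by (apply ex_RInt_continuous_R; exact Hf).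
  rewrite (RInt_ext (V:=R_CompleteNormedModule) f (fun z => exp (- g * (y - z)) * u z) a y),
    (RInt_ext (V:=R_CompleteNormedModule) f (fun z => exp (- g * (z - y)) * u z) y b).
  - simpl. unfold plus; simpl. field.
  - intros z Hz. rewrite Rmin_left, Rmax_right in Hz by lra. unfold f.
    rewrite Rabs_minus_sym, Rabs_pos_eq by lra. reflexivity.
  - intros z Hz. rewrite Rmin_left, Rmax_right in Hz by lra. unfold f.
    rewrite Rabs_pos_eq by lra. reflexivity.
Qed.

End Right_operator.

Lemma exp_le_one x : x <= 0 -> exp x <= 1.
Proof.
  intros H. rewrite <- exp_0.
  destruct (Rle_lt_or_eq_dec x 0 H) as [Hlt | ->].
  - left. apply exp_increasing, Hlt.
  - right. reflexivity.
Qed.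

(* D0 annihilates the two boundary exponentials, so only r contributes: through r x and
   through a combination of r a and r b with nonnegative weights of sum at most 1. *)
Lemma D0_bound (a b g : R) (v r : R -> R) (p q K x : R) : a < b -> 0 < g ->
  (forall y, a <= y <= b ->
     v y - I0 a b g v y = r y + p * exp (- g * (y - a)) + q * exp (- g * (b - y))) ->
  (forall y, a <= y <= b -> Rabs (r y) <= K) -> a <= x <= b ->
  Rabs (D0 a b 0 0 g v x) <= 2 * K.
Proof.
  intros Hab Hg Hv Hr Hx.
  assert (Ha := Hv a ltac:(lra)). assert (Hb := Hv b ltac:(lra)). assert (Hvx := Hv x Hx).
  replace (- g * (a - a)) with 0 in Ha by ring. replace (- g * (b - b)) with 0 in Hb by ring.
  rewrite exp_0 in Ha, Hb.
  unfold D0. set (mu := exp (- g * (b - a))) in *.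
  set (E := exp (- g * (x - a))) in *. set (F := exp (- g * (b - x))) in *.
  assert (HmuEF : mu = E * F) by (unfold mu, E, F; rewrite <- exp_plus; f_equal; ring).
  assert (HE : 0 < E <= 1) by (split; [apply exp_pos | apply exp_le_one; nra]).
  assert (HF : 0 < F <= 1) by (split; [apply exp_pos | apply exp_le_one; nra]).
  assert (Hmu : 0 < mu < 1)
    by (split; [apply exp_pos | rewrite <- exp_0; apply exp_increasing; nra]).
  set (cA := (E - mu * F) / (1 - mu ^ 2)). set (cB := (F - mu * E) / (1 - mu ^ 2)).
  replace (v x - I0 a b g v x
      - / (1 - mu ^ 2) * (mu * (I0 a b g v b - v b + 0) - (I0 a b g v a - v a + 0)) * E
      - / (1 - mu ^ 2) * (mu * (I0 a b g v a - v a + 0) - (I0 a b g v b - v b + 0)) * F)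
    with (r x - (r a * cA + r b * cB))
    by (unfold cA, cB; rewrite Hvx;
        replace (I0 a b g v a) with (v a - (r a + p * 1 + q * mu)) by lra;
        replace (I0 a b g v b) with (v b - (r b + p * mu + q * 1)) by lra;
        rewrite HmuEF; field; nra).
  assert (Hden : 0 < / (1 - mu ^ 2)) by (apply Rinv_0_lt_compat; nra).
  assert (HcA : 0 <= cA) by (unfold cA; apply Rmult_le_pos; [rewrite HmuEF; nra | lra]).
  assert (HcB : 0 <= cB) by (unfold cB; apply Rmult_le_pos; [rewrite HmuEF; nra | lra]).
  assert (HcAB : cA + cB <= 1).
  { replace (cA + cB) with ((E + F) / (1 + mu)) by (unfold cA, cB; field; nra).
    apply Rmult_le_reg_r with (1 + mu); [lra |].
    unfold Rdiv. rewrite Rmult_assoc, Rinv_l by lra. rewrite HmuEF. nra. }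
  assert (Hra := Hr a ltac:(lra)). assert (Hrb := Hr b ltac:(lra)). assert (Hrx := Hr x Hx).
  apply Rabs_le_between in Hra, Hrb, Hrx. apply Rabs_le. nra.
Qed.

(** * Extension of the derivatives to a smooth chain on R *)

Definition smooth_chain (n : nat) (c : nat -> R -> R) : Prop :=
  (forall j x, (j < n)%nat -> is_derive (c j) x (c (S j) x)) /\ (forall x, continuous (c n) x).

Lemma smooth_chain_continuous n c j x : smooth_chain n c -> (j <= n)%nat -> continuous (c j) x.
Proof.
  intros [Hd Hc] Hj. destruct (Nat.eq_dec j n) as [-> | Hne]; [apply Hc |].
  apply (ex_derive_continuous (K:=R_AbsRing) (V:=R_NormedModule)).
  exists (c (S j) x). apply Hd. lia.
Qed.

Definition clamp (a b x : R) : R := Rmax a (Rmin x b).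

Lemma clamp_id a b x : a <= x <= b -> clamp a b x = x.
Proof. intros Hx. unfold clamp. rewrite Rmin_left, Rmax_right; lra. Qed.

Lemma clamp_between a b x : a <= b -> a <= clamp a b x <= b.
Proof.
  intros Hab. unfold clamp. split; [apply Rmax_l |].
  apply Rmax_lub; [exact Hab | apply Rmin_r].
Qed.

Lemma clamp_lipschitz a b x y : Rabs (clamp a b y - clamp a b x) <= Rabs (y - x).
Proof.
  assert (H1 := Rle_abs (y - x)). assert (H2 := Rle_abs (- (y - x))). rewrite Rabs_Ropp in H2.
  unfold clamp, Rmax, Rmin. repeat destruct Rle_dec; apply Rabs_le; lra.
Qed.

Lemma filterlim_within_eps_delta (P : R -> Prop) (F : R -> R) x l :
  filterlim F (within P (locally x)) (locally l) ->
  forall eps, 0 < eps -> exists del, 0 < del /\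
    forall y, P y -> Rabs (y - x) < del -> Rabs (F y - l) < eps.
Proof.
  intros H eps Heps.
  destruct (proj1 (filterlim_locally F l) H (mkposreal eps Heps)) as [del Hdel].
  exists del. split; [apply cond_pos |]. intros y Py Hy. exact (Hdel y Hy Py).
Qed.

Lemma deriv_within_continuous a b f f' : deriv_within a b f f' -> cont_within a b f.
Proof.
  intros Hd x Hx. apply filterlim_locally. intros eps.
  destruct (filterlim_within_eps_delta _ _ _ _ (Hd x Hx) 1 Rlt_0_1) as [d1 [Hd1 H1]].
  set (K := Rabs (f' x) + 1).
  assert (HK : 0 < K) by (unfold K; assert (T := Rabs_pos (f' x)); lra).
  assert (Hdel : 0 < Rmin d1 (eps / K))
    by (apply Rmin_pos; [exact Hd1 | apply Rdiv_lt_0_compat, HK; apply cond_pos]).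
  exists (mkposreal _ Hdel). intros y Hy Py. change (Rabs (y - x) < Rmin d1 (eps / K)) in Hy.
  change (Rabs (f y - f x) < eps).
  destruct (Req_dec y x) as [-> | Hne]; [rewrite Rminus_diag, Rabs_R0; apply cond_pos |].
  assert (Hq := H1 y (conj Py Hne) (Rlt_le_trans _ _ _ Hy (Rmin_l _ _))).
  assert (Hq' : Rabs ((f y - f x) / (y - x)) <= K).
  { unfold K. replace ((f y - f x) / (y - x)) with ((f y - f x) / (y - x) - f' x + f' x) by ring.
    eapply Rle_trans; [apply Rabs_triang | lra]. }
  replace (f y - f x) with ((f y - f x) / (y - x) * (y - x)) by (field; lra).
  rewrite Rabs_mult. apply Rle_lt_trans with (K * Rabs (y - x)).
  - apply Rmult_le_compat_r; [apply Rabs_pos | exact Hq'].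
  - replace (pos eps) with (K * (eps / K)) by (field; lra).
    apply Rmult_lt_compat_l; [exact HK | exact (Rlt_le_trans _ _ _ Hy (Rmin_r _ _))].
Qed.

Lemma continuous_clamp a b f x : a <= b -> cont_within a b f ->
  continuous (fun y => f (clamp a b y)) x.
Proof.
  intros Hab Hc. apply filterlim_locally. intros eps.
  destruct (filterlim_within_eps_delta _ _ _ _ (Hc (clamp a b x) (clamp_between a b x Hab))
    eps (cond_pos eps)) as [del [Hdel H]].
  exists (mkposreal _ Hdel). intros y Hy. apply H; [apply clamp_between, Hab |].
  eapply Rle_lt_trans; [apply clamp_lipschitz | exact Hy].
Qed.

Lemma is_derive_clamp_interior a b f f' x : deriv_within a b f f' -> a < x < b ->
  is_derive (fun y => f (clamp a b y)) x (f' x).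
Proof.
  intros Hd Hx. apply is_derive_Reals. intros eps Heps.
  destruct (filterlim_within_eps_delta _ _ _ _ (Hd x ltac:(lra)) eps Heps) as [del [Hdel H]].
  assert (Hpos : 0 < Rmin del (Rmin (x - a) (b - x))) by (repeat apply Rmin_pos; lra).
  exists (mkposreal _ Hpos). intros h Hh Hlt. simpl in Hlt.
  assert (Hl1 := Rlt_le_trans _ _ _ Hlt (Rmin_l _ _)).
  assert (Hl2 := Rlt_le_trans _ _ _ (Rlt_le_trans _ _ _ Hlt (Rmin_r _ _)) (Rmin_l _ _)).
  assert (Hl3 := Rlt_le_trans _ _ _ (Rlt_le_trans _ _ _ Hlt (Rmin_r _ _)) (Rmin_r _ _)).
  apply Rabs_lt_between in Hl2, Hl3.
  rewrite !clamp_id by lra. replace h with (x + h - x) at 2 by ring.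
  apply H.
  - split; [lra | intros Heq; apply Hh; lra].
  - replace (x + h - x) with h by ring. exact Hl1.
Qed.

Lemma deriv_within_integral a b f f' F' x : a < b -> deriv_within a b f f' ->
  (forall y, continuous F' y) -> (forall y, a <= y <= b -> F' y = f' y) -> a <= x <= b ->
  f x = f a + RInt F' a x.
Proof.
  intros Hab Hd HF HFf Hx.
  set (G := fun t => f (clamp a b t) - RInt F' a t).
  assert (HG' : forall t, a < t < b -> derivable_pt_lim G t 0).
  { intros t Ht. apply is_derive_Reals.
    replace 0 with (minus (f' t) (F' t)) by (rewrite HFf by lra; apply Rminus_diag).
    apply (is_derive_minus (fun t => f (clamp a b t)) (fun t => RInt F' a t)).
    - apply is_derive_clamp_interior; assumption.
    - apply is_derive_RInt_upper, HF. }
  assert (Hconst := null_derivative_loc G a b (fun t Ht => exist _ 0 (HG' t Ht))).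
  assert (HGx : G x = G a).
  { apply Hconst; [| reflexivity | exact Hx].
    intros t Ht. apply continuity_pt_filterlim.
    apply (continuous_Rminus (fun t => f (clamp a b t))).
    - apply continuous_clamp; [lra | apply (deriv_within_continuous a b f f' Hd)].
    - apply continuous_primitive, HF. }
  unfold G in HGx. rewrite !clamp_id, (RInt_point (V:=R_CompleteNormedModule)) in HGx by lra.
  simpl in HGx. cbv [zero] in HGx; simpl in HGx. lra.
Qed.

Lemma is_derive_primitive (h : R -> R) (l c0 x : R) : (forall y, continuous h y) ->
  is_derive (fun t => c0 + RInt h l t) x (h x).
Proof.
  intros Hh. assert (H := is_derive_RInt_upper h l x Hh).
  apply is_derive_Reals in H. apply is_derive_Reals.
  replace (h x) with (0 + h x) by ring.
  apply (derivable_pt_lim_plus (fun _ => c0)); [apply derivable_pt_lim_const | exact H].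
Qed.

(* Coquelicot's fundamental theorem needs two-sided derivatives on the closed interval, so the
   one-sided data on [a,b] are replaced by functions on R: the top derivative is extended by
   constants, each lower one by integrating the next. *)
Fixpoint primitive_chain (a b : R) (d : nat -> R -> R) (m j : nat) : R -> R :=
  match m with
  | O => fun x => d j (clamp a b x)
  | S m' => fun x => d j a + RInt (primitive_chain a b d m' (S j)) a x
  end.

Lemma primitive_chain_spec a b n d m j : a < b -> Cn_ab n a b d -> (j + m = n)%nat ->
  (forall x, continuous (primitive_chain a b d m j) x)
  /\ (forall y, a <= y <= b -> primitive_chain a b d m j y = d j y).
Proof.
  intros Hab [Hder Hcont]. revert j. induction m as [| m IH]; intros j Hjm; simpl.
  - rewrite Nat.add_0_r in Hjm. subst j.
    split; [intros; apply continuous_clamp; [lra | exact Hcont] | intros; rewrite clamp_id; auto].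
  - destruct (IH (S j) ltac:(lia)) as [Hc Heq]. split.
    + intros x. apply (ex_derive_continuous (K:=R_AbsRing) (V:=R_NormedModule)).
      eexists. apply is_derive_primitive, Hc.
    + intros y Hy. symmetry. apply (deriv_within_integral a b (d j) (d (S j))); auto.
      apply Hder. lia.
Qed.

Lemma smooth_extension a b n d : a < b -> Cn_ab n a b d ->
  exists c, smooth_chain n c /\ forall j y, a <= y <= b -> c j y = d j y.
Proof.
  intros Hab Hd. exists (fun j => primitive_chain a b d (n - j) j). split; [split |].
  - intros j x Hj. replace (n - j)%nat with (S (n - S j)) by lia.
    apply is_derive_primitive. apply (primitive_chain_spec a b n); [exact Hab | exact Hd | lia].
  - intros x. rewrite Nat.sub_diag. apply continuous_clamp; [lra | exact (proj2 Hd)].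
  - intros j y Hy. destruct (Nat.le_gt_cases j n) as [Hj | Hj].
    + apply (primitive_chain_spec a b n); [exact Hab | exact Hd | lia | exact Hy].
    + replace (n - j)%nat with 0%nat by lia. simpl. rewrite clamp_id; auto.
Qed.

(** * Error identities for the left-sided sums *)

Lemma sum_n_m_Rmult_r (u : nat -> R) (e : R) n m :
  sum_n_m (fun k => u k * e) n m = sum_n_m u n m * e.
Proof. apply (sum_n_m_mult_r (K:=R_Ring)). Qed.

Lemma sum_n_m_2_1 (u : nat -> R) : sum_n_m u 2 1 = 0.
Proof. apply (sum_n_m_zero (G:=R_AbelianMonoid)). lia. Qed.

Lemma sum_n_m_2_3 (u : nat -> R) : sum_n_m u 2 3 = u 2%nat + u 3%nat.
Proof. rewrite (sum_n_Sm u 2 2), sum_n_n by lia. reflexivity. Qed.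

Section Left_corrections.
Variables (a b g : R) (n : nat) (c : nat -> R -> R).
Hypothesis g_pos : 0 < g.
Hypothesis c_chain : smooth_chain n c.

Local Notation E := (fun y => exp (- g * (y - a))).

Let c_cont j : (j <= n)%nat -> forall y, continuous (c j) y.
Proof. intros Hj y. exact (smooth_chain_continuous n c j y c_chain Hj). Qed.

Lemma IL_chain j y : (j < n)%nat ->
  IL a g (c j) y = c j y - c j a * exp (- g * (y - a)) - / g * IL a g (c (S j)) y.
Proof.
  intros Hj.
  assert (H := DL0_by_parts a g (c j) (c (S j)) y ltac:(lra)
    (fun x => proj1 c_chain j x Hj) (c_cont (S j) Hj)).
  unfold DL in H. lra.
Qed.

Lemma IL_IL_chain j y : (j < n)%nat ->
  IL a g (IL a g (c j)) y
  = IL a g (c j) y - c j a * IL a g E y - / g * IL a g (IL a g (c (S j))) y.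
Proof.
  intros Hj.
  assert (Hc := c_cont j ltac:(lia)). assert (Hc' := c_cont (S j) Hj).
  transitivity (IL a g (fun z => c j z - c j a * E z - / g * IL a g (c (S j)) z) y).
  - f_equal. apply functional_extensionality. intros z. apply IL_chain, Hj.
  - rewrite !IL_minus, !IL_scal by solve_continuous. ring.
Qed.

Lemma IR_chain j y : (j < n)%nat ->
  IR b g (c j) y = c j y - c j b * exp (- g * (b - y)) + / g * IR b g (c (S j)) y.
Proof.
  intros Hj.
  assert (H := DR0_by_parts a b g (c j) (c (S j)) y ltac:(lra)
    (fun x => proj1 c_chain j x Hj) (c_cont (S j) Hj)).
  unfold DR in H. lra.
Qed.

Lemma DL_first_term_eq x : (1 < n)%nat ->
  g * DL a (c 1%nat a / g) g (c 0%nat) x = c 1%nat x - / g * IL a g (c 2%nat) x.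
Proof.
  intros Hn. unfold DL. rewrite (IL_chain 0), (IL_chain 1) by lia. field. lra.
Qed.

Lemma phi12_eq k y : (0 < n)%nat ->
  phi12 a k g c y = / g * IL a g (c 1%nat) y
    + (c 1%nat a / g - sum_n_m (fun m => (- / g) ^ m * c m a) 2 k) * exp (- g * (y - a)).
Proof.
  intros Hn. unfold phi12, DL. rewrite sum_n_m_Rmult_r, (IL_chain 0) by lia. field. lra.
Qed.

Lemma DL0_phi12 k x : (0 < n)%nat ->
  DL a 0 g (phi12 a k g c) x = / g * (IL a g (c 1%nat) x - IL a g (IL a g (c 1%nat)) x)
    - (c 1%nat a / g - sum_n_m (fun m => (- / g) ^ m * c m a) 2 k) * IL a g E x.
Proof.
  intros Hn. assert (Hc1 := c_cont 1 Hn).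
  rewrite (functional_extensionality _ _ (fun y => phi12_eq k y Hn)).
  unfold DL. rewrite IL_plus, !IL_scal, IL_at_left by solve_continuous.
  replace (- g * (a - a)) with 0 by ring. rewrite exp_0. ring.
Qed.

Lemma PL_error_1 x : (1 < n)%nat -> c 1%nat x - PL a b 1 g c x = / g * IL a g (c 2%nat) x.
Proof.
  intros Hn. unfold PL. rewrite sum_n_m_2_1. cbn [phi1 Nat.eqb].
  rewrite DL_first_term_eq by exact Hn. ring.
Qed.

Lemma PL_error_2 x : (2 < n)%nat ->
  c 1%nat x - PL a b 2 g c x = / g ^ 2 * IL a g (IL a g (c 3%nat)) x.
Proof.
  intros Hn. unfold PL. rewrite !sum_n_n. cbn [phi1 Nat.eqb].
  rewrite DL_first_term_eq, DL0_phi12, sum_n_n, (IL_IL_chain 1), (IL_IL_chain 2) by lia.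
  field. lra.
Qed.

Lemma phi13_eq y : (3 < n)%nat ->
  phi13 a 3 g c y = / g ^ 2 * c 2%nat y - 2 / g ^ 3 * c 3%nat y
    + 2 / g ^ 4 * IL a g (c 4%nat) y + / g ^ 4 * IL a g (IL a g (c 4%nat)) y.
Proof.
  intros Hn. unfold phi13. rewrite DL0_phi12, !sum_n_m_2_3 by lia.
  rewrite (IL_IL_chain 1), (IL_IL_chain 2), (IL_IL_chain 3), (IL_chain 2), (IL_chain 3) by lia.
  simpl INR. field. lra.
Qed.

Lemma PL_error_3 x : (3 < n)%nat ->
  c 1%nat x - PL a b 3 g c x
  = / g ^ 3 * IL a g (IL a g (IL a g (c 4%nat))) x + g * D0 a b 0 0 g (phi13 a 3 g c) x.
Proof.
  intros Hn. assert (Hc2 := c_cont 2 ltac:(lia)). assert (Hc3 := c_cont 3 ltac:(lia)).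
  assert (Hc4 := c_cont 4 ltac:(lia)).
  unfold PL. rewrite sum_n_m_2_3. cbn [phi1 Nat.eqb].
  rewrite DL_first_term_eq, DL0_phi12, sum_n_m_2_3 by lia.
  rewrite (functional_extensionality _ _ (fun y => phi13_eq y Hn)).
  unfold DL. rewrite !IL_plus, !IL_minus, !IL_scal, !IL_at_left by solve_continuous.
  rewrite (IL_IL_chain 1), (IL_IL_chain 2), (IL_IL_chain 3), (IL_chain 2), (IL_chain 3) by lia.
  field. lra.
Qed.

Lemma D0_phi13_bound M x : (3 < n)%nat -> a < b ->
  (forall y, a <= y <= b -> Rabs (c 4%nat y) <= M) -> a <= x <= b ->
  Rabs (D0 a b 0 0 g (phi13 a 3 g c) x) <= 18 * M / g ^ 4.
Proof.
  intros Hn Hab HM Hx. assert (Hc2 := c_cont 2 ltac:(lia)).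
  assert (Hc3 := c_cont 3 ltac:(lia)). assert (Hc4 := c_cont 4 ltac:(lia)).
  assert (HT : forall y, a <= y <= b -> Rabs (IL a g (c 4%nat) y) <= M)
    by (intros; apply (IL_bound a g b); auto).
  assert (HTT : forall y, a <= y <= b -> Rabs (IL a g (IL a g (c 4%nat)) y) <= M)
    by (intros; apply (IL_bound a g b); solve_continuous).
  assert (HS : forall y, a <= y <= b -> Rabs (IR b g (c 4%nat) y) <= M)
    by (intros; apply (IR_bound a); auto).
  rewrite (functional_extensionality _ _ (fun y => phi13_eq y Hn)).
  replace (18 * M / g ^ 4) with (2 * (/ g ^ 4 * (9 * M))) by (field; lra).
  (* r: split I0 = (IL + IR) / 2 and integrate c 2, c 3 by parts once on each side. *)
  apply (D0_bound a b g _
    (fun y => / g ^ 4 * (- (IL a g (c 4%nat) y + IR b g (c 4%nat) y) / 2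
       - (IL a g (c 4%nat) y - IR b g (c 4%nat) y)
       + 2 * (IL a g (c 4%nat) y - I0 a b g (IL a g (c 4%nat)) y)
       + (IL a g (IL a g (c 4%nat)) y - I0 a b g (IL a g (IL a g (c 4%nat))) y)))
    (/ g ^ 2 * c 2%nat a / 2 - 3 / g ^ 3 * c 3%nat a / 2)
    (/ g ^ 2 * c 2%nat b / 2 - / g ^ 3 * c 3%nat b / 2)); auto.
  - intros y Hy. rewrite !(I0_split a b) by solve_continuous.
    rewrite !IL_plus, !IL_minus, !IL_scal, !IR_plus, !IR_minus, !IR_scal by solve_continuous.
    rewrite (IL_chain 2), (IL_chain 3), (IR_chain 2), (IR_chain 3) by lia.
    field. lra.
  - intros y Hy. rewrite !(I0_split a b) by solve_continuous.
    assert (H1 := HT y Hy). assert (H2 := HTT y Hy). assert (H3 := HS y Hy).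
    assert (H4 : Rabs (IL a g (IL a g (IL a g (c 4%nat))) y) <= M)
      by (apply (IL_bound a g b); solve_continuous).
    assert (H5 : Rabs (IR b g (IL a g (c 4%nat)) y) <= M) by (apply (IR_bound a); solve_continuous).
    assert (H6 : Rabs (IR b g (IL a g (IL a g (c 4%nat))) y) <= M)
      by (apply (IR_bound a); solve_continuous).
    assert (Hg4 : 0 < / g ^ 4) by (apply Rinv_0_lt_compat, pow_lt, g_pos).
    rewrite Rabs_mult, (Rabs_pos_eq (/ g ^ 4)) by lra. apply Rmult_le_compat_l; [lra |].
    apply Rabs_le_between in H1, H2, H3, H4, H5, H6. apply Rabs_le. lra.
Qed.

Lemma PL_error_bound k M x : n = S k -> (1 <= k <= 3)%nat -> a < b ->
  (forall y, a <= y <= b -> Rabs (c n y) <= M) -> a <= x <= b ->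
  Rabs (c 1%nat x - PL a b k g c x) <= 19 * (/ g) ^ k * M.
Proof.
  intros Hn Hk Hab HM Hx. rewrite pow_inv.
  assert (HM0 : 0 <= M) by (apply Rle_trans with (Rabs (c n a)); [apply Rabs_pos | apply HM; lra]).
  assert (Hgk : 0 < / g ^ k) by (apply Rinv_0_lt_compat, pow_lt, g_pos).
  assert (Hc := c_cont n (le_n n)).
  assert (Hbound : forall u, (forall y, continuous u y) ->
    (forall y, a <= y <= b -> Rabs (u y) <= M) -> forall y, a <= y <= b -> Rabs (IL a g u y) <= M)
    by (intros; apply (IL_bound a g b); auto).
  destruct k as [| [| [| [| k]]]]; try lia; rewrite Hn in HM, Hc.
  - rewrite PL_error_1 by lia. simpl in Hgk |- *. rewrite Rmult_1_r in *.
    rewrite Rabs_mult, Rabs_pos_eq by lra.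
    specialize (Hbound _ Hc HM x Hx). nra.
  - rewrite PL_error_2 by lia. rewrite Rabs_mult, Rabs_pos_eq by lra.
    assert (HT : forall y, continuous (IL a g (c 3%nat)) y) by solve_continuous.
    specialize (Hbound _ HT (Hbound _ Hc HM) x Hx). nra.
  - rewrite PL_error_3 by lia.
    assert (HT : forall y, continuous (IL a g (c 4%nat)) y) by solve_continuous.
    assert (HTT : forall y, continuous (IL a g (IL a g (c 4%nat))) y) by solve_continuous.
    assert (H1 := Hbound _ HTT (Hbound _ HT (Hbound _ Hc HM)) x Hx).
    assert (H2 := D0_phi13_bound M x ltac:(lia) Hab HM Hx).
    eapply Rle_trans; [apply Rabs_triang |].
    rewrite !Rabs_mult, (Rabs_pos_eq (/ g ^ 3)), (Rabs_pos_eq g) by lra.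
    apply Rle_trans with (/ g ^ 3 * M + g * (18 * M / g ^ 4)); [nra |].
    right. field. lra.
Qed.

End Left_corrections.

(** * Reflection and the right-sided sums *)

Definition reflect_family (a b : R) (c : nat -> R -> R) (j : nat) (y : R) : R :=
  (-1) ^ j * c j (a + b - y).

Lemma smooth_chain_reflect a b n c : smooth_chain n c -> smooth_chain n (reflect_family a b c).
Proof.
  intros [Hd Hc]. split.
  - intros j x Hj. unfold reflect_family.
    replace ((-1) ^ S j * c (S j) (a + b - x)) with ((-1) ^ j * (-1 * c (S j) (a + b - x)))
      by (simpl; ring).
    apply is_derive_scal, (is_derive_comp (c j) (fun y => a + b - y)); [apply Hd, Hj |].
    auto_derive; [exact I | as_real_eq; ring].
  - intros x. unfold reflect_family. solve_continuous.
Qed.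

Lemma continuous_phi12 a k g c x : (forall y, continuous (c 0%nat) y) ->
  continuous (phi12 a k g c) x.
Proof.
  intros Hc. unfold phi12, DL.
  apply (continuous_ext (fun y => c 0%nat y - IL a g (c 0%nat) y
    - (c 0%nat a - c 1%nat a / g) * exp (- g * (y - a))
    - sum_n_m (fun m => (- / g) ^ m * c m a) 2 k * exp (- g * (y - a)))).
  - intros y. rewrite sum_n_m_Rmult_r. reflexivity.
  - solve_continuous.
Qed.

#[export] Hint Resolve continuous_phi12 : rcont.

Lemma continuous_phi13 a k g c x : (forall y, continuous (c 0%nat) y) ->
  continuous (phi13 a k g c) x.
Proof.
  intros Hc. unfold phi13, DL.
  apply (continuous_ext (fun y => phi12 a k g c y - IL a g (phi12 a k g c) y
    - (phi12 a k g c a - 0) * exp (- g * (y - a))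
    + sum_n_m (fun m => (INR m - 1) * (- / g) ^ m * c m a) 2 k * exp (- g * (y - a)))).
  - intros y. rewrite sum_n_m_Rmult_r. reflexivity.
  - solve_continuous.
Qed.

Lemma continuous_phi1 a k g c p x : (forall y, continuous (c 0%nat) y) ->
  continuous (phi1 a k g c p) x.
Proof.
  intros Hc. destruct p as [| [| [| [| p]]]]; cbn [phi1];
    auto using continuous_phi12, continuous_phi13.
Qed.

Section Right_by_reflection.
Variables (a b g : R) (k : nat) (c : nat -> R -> R).
Hypothesis c0_cont : forall y, continuous (c 0%nat) y.

Local Notation c' := (reflect_family a b c).

Let c'0_cont y : continuous (c' 0%nat) y.
Proof. unfold reflect_family. solve_continuous. Qed.

Let c'0_eq : (fun y => c 0%nat (a + b - y)) = c' 0%nat.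
Proof. apply functional_extensionality. intros y. unfold reflect_family. simpl. ring. Qed.

Lemma phi22_reflect x : phi22 b k g c x = phi12 a k g c' (a + b - x).
Proof.
  unfold phi22, phi12. rewrite (DR_reflect a), c'0_eq by exact c0_cont. f_equal.
  - f_equal. unfold reflect_family. replace (a + b - a) with b by ring. simpl. unfold Rdiv. ring.
  - apply sum_n_m_ext. intros m. unfold reflect_family.
    replace (a + b - a) with b by ring. replace (a + b - x - a) with (b - x) by ring.
    rewrite <- Rmult_assoc, <- Rpow_mult_distr. replace (- / g * -1) with (/ g) by ring.
    reflexivity.
Qed.

Lemma phi23_reflect x : phi23 b k g c x = phi13 a k g c' (a + b - x).
Proof.
  assert (Hphi22 : (fun y => phi22 b k g c (a + b - y)) = phi12 a k g c').
  { apply functional_extensionality. intros y. rewrite phi22_reflect. f_equal. ring. }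
  unfold phi23, phi13. rewrite (DR_reflect a), Hphi22.
  - f_equal. apply sum_n_m_ext. intros m. as_real_eq. unfold reflect_family.
    replace (a + b - a) with b by ring. replace (a + b - x - a) with (b - x) by ring.
    replace ((INR m - 1) * (- / g) ^ m * ((-1) ^ m * c m b))
      with ((INR m - 1) * ((- / g * -1) ^ m * c m b)) by (rewrite Rpow_mult_distr; ring).
    replace (- / g * -1) with (/ g) by ring. ring.
  - intros y. apply (continuous_ext (fun y => phi12 a k g c' (a + b - y))).
    + intros z. symmetry. apply phi22_reflect.
    + solve_continuous.
Qed.

Lemma phi2_reflect p y : phi2 b k g c p y = phi1 a k g c' p (a + b - y).
Proof.
  destruct p as [| [| [| [| p]]]]; cbn [phi1 phi2];
    try (unfold reflect_family; simpl; replace (a + b - (a + b - y)) with y by ring; ring).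
  - apply phi22_reflect.
  - apply phi23_reflect.
Qed.

Lemma PR_reflect x : PR a b k g c x = - PL a b k g c' (a + b - x).
Proof.
  assert (Hphi2 : forall p, (fun y => phi2 b k g c p (a + b - y)) = phi1 a k g c' p).
  { intros p. apply functional_extensionality. intros y. rewrite phi2_reflect. f_equal. ring. }
  assert (Hcont : forall p y, continuous (phi2 b k g c p) y).
  { intros p y. apply (continuous_ext (fun y => phi1 a k g c' p (a + b - y))).
    - intros z. symmetry. apply phi2_reflect.
    - apply continuous_Rcomp; [solve_continuous | apply continuous_phi1, c'0_cont]. }
  unfold PR, PL. rewrite (DR_reflect a), (D0_reflect a), !Hphi2 by apply Hcont.
  rewrite (sum_n_m_ext _ (fun p => DL a 0 g (phi1 a k g c' p) (a + b - x)))
    by (intros p; rewrite (DR_reflect a), Hphi2 by apply Hcont; reflexivity).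
  replace (c' 1%nat a / g) with (- (c 1%nat b / g))
    by (unfold reflect_family; replace (a + b - a) with b by ring; unfold Rdiv; ring).
  ring.
Qed.

End Right_by_reflection.

Lemma PR_error_bound a b g k c M x : 0 < g -> smooth_chain (S k) c -> (1 <= k <= 3)%nat -> a < b ->
  (forall y, a <= y <= b -> Rabs (c (S k) y) <= M) -> a <= x <= b ->
  Rabs (c 1%nat x - PR a b k g c x) <= 19 * (/ g) ^ k * M.
Proof.
  intros Hg Hc Hk Hab HM Hx.
  rewrite PR_reflect by (intros y; apply (smooth_chain_continuous (S k)); [exact Hc | lia]).
  replace (c 1%nat x - - PL a b k g (reflect_family a b c) (a + b - x))
    with (- (reflect_family a b c 1%nat (a + b - x)
             - PL a b k g (reflect_family a b c) (a + b - x)))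
    by (unfold reflect_family; replace (a + b - (a + b - x)) with x by ring; ring).
  rewrite Rabs_Ropp.
  apply (PL_error_bound a b g (S k)); [exact Hg | apply smooth_chain_reflect, Hc | reflexivity
    | exact Hk | exact Hab | | lra].
  intros y Hy. unfold reflect_family. rewrite Rabs_mult, pow_1_abs, Rmult_1_l. apply HM. lra.
Qed.

(** * Locality and the main estimate *)

Section Locality.
Variables (a b g : R).

Lemma DL_ext k (u w : R -> R) x : (forall y, a <= y <= b -> u y = w y) -> a <= x <= b ->
  DL a k g u x = DL a k g w x.
Proof.
  intros H Hx. unfold DL, IL. rewrite !H by lra. do 3 f_equal.
  apply (RInt_ext (V:=R_CompleteNormedModule)). intros y Hy.
  rewrite Rmin_left, Rmax_right in Hy by lra. rewrite H by lra. reflexivity.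
Qed.

Lemma DR_ext k (u w : R -> R) x : (forall y, a <= y <= b -> u y = w y) -> a <= x <= b ->
  DR b k g u x = DR b k g w x.
Proof.
  intros H Hx. unfold DR, IR. rewrite !H by lra. do 3 f_equal.
  apply (RInt_ext (V:=R_CompleteNormedModule)). intros y Hy.
  rewrite Rmin_left, Rmax_right in Hy by lra. rewrite H by lra. reflexivity.
Qed.

Lemma D0_ext (u w : R -> R) x : (forall y, a <= y <= b -> u y = w y) -> a <= x <= b ->
  D0 a b 0 0 g u x = D0 a b 0 0 g w x.
Proof.
  intros H Hx.
  assert (HI : forall y, I0 a b g u y = I0 a b g w y).
  { intros y. unfold I0. f_equal. apply (RInt_ext (V:=R_CompleteNormedModule)). intros z Hz.
    rewrite Rmin_left, Rmax_right in Hz by lra. rewrite H by lra. reflexivity. }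
  unfold D0. rewrite !HI, !H by lra. reflexivity.
Qed.

Variables (k : nat) (d c : nat -> R -> R).
Hypothesis agree : forall j y, a <= y <= b -> d j y = c j y.

Lemma phi1_local p y : a <= y <= b -> phi1 a k g d p y = phi1 a k g c p y.
Proof.
  assert (H12 : forall y, a <= y <= b -> phi12 a k g d y = phi12 a k g c y).
  { intros z Hz. unfold phi12. rewrite (DL_ext _ _ (c 0%nat)), !agree by (auto; lra).
    f_equal. apply sum_n_m_ext. intros m. rewrite agree by lra. reflexivity. }
  intros Hy. destruct p as [| [| [| [| p]]]]; cbn [phi1]; auto.
  unfold phi13. rewrite (DL_ext _ _ (phi12 a k g c)) by auto.
  f_equal. apply sum_n_m_ext. intros m. rewrite agree by lra. reflexivity.
Qed.

Lemma phi2_local p y : a <= y <= b -> phi2 b k g d p y = phi2 b k g c p y.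
Proof.
  assert (H22 : forall y, a <= y <= b -> phi22 b k g d y = phi22 b k g c y).
  { intros z Hz. unfold phi22. rewrite (DR_ext _ _ (c 0%nat)), !agree by (auto; lra).
    f_equal. apply sum_n_m_ext. intros m. rewrite agree by lra. reflexivity. }
  intros Hy. destruct p as [| [| [| [| p]]]]; cbn [phi2]; auto.
  unfold phi23. rewrite (DR_ext _ _ (phi22 b k g c)) by auto.
  f_equal. apply sum_n_m_ext. intros m. rewrite agree by lra. reflexivity.
Qed.

Lemma PL_local x : a <= x <= b -> PL a b k g d x = PL a b k g c x.
Proof.
  intros Hx. unfold PL. rewrite agree by lra.
  rewrite (DL_ext _ _ (phi1 a k g c 1)), (D0_ext _ (phi1 a k g c 3))
    by (auto; intros; apply phi1_local; auto).
  do 3 f_equal. apply sum_n_m_ext. intros p. apply DL_ext; [intros; apply phi1_local |]; auto.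
Qed.

Lemma PR_local x : a <= x <= b -> PR a b k g d x = PR a b k g c x.
Proof.
  intros Hx. unfold PR. rewrite agree by lra.
  rewrite (DR_ext _ _ (phi2 b k g c 1)), (D0_ext _ (phi2 b k g c 3))
    by (auto; intros; apply phi2_local; auto).
  do 3 f_equal. apply sum_n_m_ext. intros p. apply DR_ext; [intros; apply phi2_local |]; auto.
Qed.

End Locality.

Lemma supnorm_le a b u B : a <= b -> (forall x, a <= x <= b -> Rabs (u x) <= B) ->
  supnorm a b u <= B.
Proof.
  intros Hab HB. unfold supnorm.
  destruct (Lub_Rbar_correct (fun r => exists x, a <= x <= b /\ r = Rabs (u x))) as [Hub Hlub].
  assert (Hle : Rbar_le (Lub_Rbar (fun r => exists x, a <= x <= b /\ r = Rabs (u x))) B)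
    by (apply Hlub; intros r [x [Hx ->]]; apply HB, Hx).
  assert (Hge : Rbar_le (Rabs (u a)) (Lub_Rbar (fun r => exists x, a <= x <= b /\ r = Rabs (u x))))
    by (apply Hub; exists a; split; [lra | reflexivity]).
  destruct (Lub_Rbar _); simpl in *; tauto.
Qed.

Lemma le_supnorm a b u x : (exists B, forall y, a <= y <= b -> Rabs (u y) <= B) ->
  a <= x <= b -> Rabs (u x) <= supnorm a b u.
Proof.
  intros [B HB] Hx. unfold supnorm.
  destruct (Lub_Rbar_correct (fun r => exists x, a <= x <= b /\ r = Rabs (u x))) as [Hub Hlub].
  assert (Hle : Rbar_le (Lub_Rbar (fun r => exists x, a <= x <= b /\ r = Rabs (u x))) B)
    by (apply Hlub; intros r [y [Hy ->]]; apply HB, Hy).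
  assert (Hge : Rbar_le (Rabs (u x)) (Lub_Rbar (fun r => exists x, a <= x <= b /\ r = Rabs (u x))))
    by (apply Hub; exists x; split; [exact Hx | reflexivity]).
  destruct (Lub_Rbar _); simpl in *; tauto.
Qed.

Lemma continuous_bounded a b u : a <= b -> (forall x, continuous u x) ->
  exists B, forall y, a <= y <= b -> Rabs (u y) <= B.
Proof.
  intros Hab Hu.
  destruct (continuity_ab_maj (fun y => Rabs (u y)) a b Hab) as [xM [HM _]].
  - intros y _. apply continuity_pt_filterlim.
    apply continuous_Rabs_comp, Hu.
  - exists (Rabs (u xM)). exact HM.
Qed.

Theorem theorem2 (a b : R) (k : nat) :
  a < b -> (1 <= k <= 3)%nat ->
  exists C : R, 0 < C /\
    forall (g : R) (d : nat -> R -> R),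
      0 < g -> Cn_ab (S k) a b d ->
      supnorm a b (fun x => d 1%nat x - PL a b k g d x)
        <= C * (/ g) ^ k * supnorm a b (d (S k)) /\
      supnorm a b (fun x => d 1%nat x - PR a b k g d x)
        <= C * (/ g) ^ k * supnorm a b (d (S k)).
Proof.
  intros Hab Hk. exists 19. split; [lra |]. intros g d Hg Hd.
  destruct (smooth_extension a b (S k) d Hab Hd) as [c [Hc Hcd]].
  assert (HM : forall y, a <= y <= b -> Rabs (c (S k) y) <= supnorm a b (d (S k))).
  { intros y Hy. rewrite Hcd by exact Hy. apply le_supnorm; [| exact Hy].
    destruct (continuous_bounded a b (c (S k)) ltac:(lra) (proj2 Hc)) as [B HB].
    exists B. intros z Hz. rewrite <- Hcd by exact Hz. apply HB, Hz. }
  assert (Hdc : forall j y, a <= y <= b -> d j y = c j y) by (intros; symmetry; apply Hcd; auto).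
  split; apply supnorm_le; [lra | | lra |]; intros x Hx; rewrite Hdc by exact Hx.
  - rewrite (PL_local a b g k d c Hdc x Hx).
    apply (PL_error_bound a b g (S k)); auto.
  - rewrite (PR_local a b g k d c Hdc x Hx).
    apply PR_error_bound; auto.
Qed.
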